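(* Let $K$ be a field and let $r,s\ge 3$ be integers. Let $R$ be a convex $(r+s-2)$-gon with vertices labelled cyclically $1,2,\ldots,r+s-2$. The internal diagonal $\{r-1,r\}$ divides $R$ into two subpolygons: the $r$-gon $P$ with vertices $1,2,\ldots,r$ and the $s$-gon $Q$ with vertices $r-1,r,r+1,\ldots,r+s-2$. Let $D=\{\{r-1,r\}\}$, a dissection of $R$. Let $f:\mathrm{diag}(R)\to K$ be a weak frieze on $R$ with respect to $D$, and suppose $f(r-1,r)\neq 0$. Let $f_P$ and $f_Q$ be the restrictions of $f$ to $\mathrm{diag}(P)$ and $\mathrm{diag}(Q)$ respectively (these are weak friezes with respect to the empty dissection). Let $M_f$, $M_{f_P}$, $M_{f_Q}$ be the associated weak frieze matrices. Then $$\det(M_f) = -f(r-1,r)^{-2}\cdot \det(M_{f_P})\cdot \det(M_{f_Q}).$$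
   Context: For a convex polygon with vertices $1,\ldots,n$ (cyclically ordered), a diagonal is any unordered pair $\{i,j\}$ of distinct vertices (including pairs of neighbouring vertices, i.e. boundary edges); $\mathrm{diag}(P)$ denotes the set of all diagonals. A diagonal $\{i,j\}$ is internal if $i,j$ are not neighbours in the cyclic order. Two diagonals $\{i,j\}$ and $\{k,\ell\}$ cross if in the cyclic order $i<k<j<\ell$ or $i<\ell<j<k$. A dissection is a set of pairwise non-crossing internal diagonals (possibly empty). For a map $f:\mathrm{diag}(P)\to K$ write $f(i,j)=f(\{i,j\})$. Such $f$ is a weak frieze with respect to a dissection $D$ if for every pair of crossing diagonals $\{i,j\},\{k,\ell\}$ at least one of which lies in $D$, the Ptolemy relation $f(i,j)f(k,\ell)=f(i,k)f(j,\ell)+f(i,\ell)f(j,k)$ holds. (With $D=\emptyset$ every map is a weak frieze.) The weak frieze matrix of $f$ on a polygon with vertices $v_1,\ldots,v_m$ is the symmetric $m\times m$ matrix with $(a,b)$-entry $0$ if $a=b$ and $f(v_a,v_b)$ if $a\neq b$ (its determinant does not depend on the chosen ordering of the vertices). *)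

From HB Require Import structures.
From mathcomp Require Import all_boot all_order all_algebra.
Set Implicit Arguments. Unset Strict Implicit. Unset Printing Implicit Defensive.
Import Order.TTheory GRing.Theory Num.Theory.
Local Open Scope ring_scope.

(* A convex polygon is given by the list [L] of its vertex labels (natural
   numbers), in cyclic order.  A map on diagonals is encoded as a symmetric
   function [f : nat -> nat -> K] (symmetry is assumed where needed);
   [f i j] stands for f({i,j}). *)

Definition pos (L : seq nat) (v : nat) : nat := index v L.

Definition crossing (L : seq nat) (i j k l : nat) : bool :=
  [&& i \in L, j \in L, k \in L & l \in L] &&
  (((pos L i < pos L k)%N && (pos L k < pos L j)%N && (pos L j < pos L l)%N) ||
   ((pos L i < pos L l)%N && (pos L l < pos L j)%N && (pos L j < pos L k)%N)).

(* a dissection is given as a list of diagonals (ordered pairs, read as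
   unordered pairs) *)
Definition in_diss (D : seq (nat * nat)) (i j : nat) : bool :=
  ((i, j) \in D) || ((j, i) \in D).

Definition weak_frieze (K : fieldType) (L : seq nat) (D : seq (nat * nat))
  (f : nat -> nat -> K) : Prop :=
  forall i j k l : nat, crossing L i j k l -> in_diss D i j || in_diss D k l ->
    f i j * f k l = f i k * f j l + f i l * f j k.

Definition wf_matrix (K : fieldType) (f : nat -> nat -> K) (L : seq nat)
  : 'M[K]_(size L) :=
  \matrix_(a < size L, b < size L)
    (if a == b then 0 else f (nth 0%N L a) (nth 0%N L b)).

(* Cyclic order of R obtained by gluing P = (1,...,r) and
   Q = (r-1,r,...,r+s-2) along their common edge {r-1,r}:
   1,2,...,r-1, r+s-2, r+s-3, ..., r+1, r. *)
Definition R_order (r s : nat) : seq nat :=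
  iota 1 r.-1 ++ rev (iota r s.-1).

(* List the vertices of R as r-1, r, then the rest of P, then the rest of Q
   (a simultaneous permutation of rows and columns, so det M_f is unchanged).
   The block N of the edge {r-1, r} is [[0, c], [c, 0]] with c = f(r-1, r),
   so N^-1 = c^-2 N, and the Ptolemy relation for the crossing diagonals
   {a, b}, {r-1, r} (a in P, b in Q) says precisely that f(a, b) is the (a, b)
   entry of U N^-1 W^T, where U and W collect the entries f(a, r-1), f(a, r)
   and f(b, r-1), f(b, r).  The Schur complement of N in M_f is therefore block
   diagonal, with the Schur complements of N in M_{f_P} and M_{f_Q} as blocks,
   whence det M_f * det N = det M_{f_P} * det M_{f_Q} with det N = -c^2. *)

From HB Require Import structures.
From mathcomp Require Import all_boot all_order all_algebra.
From mathcomp Require Import perm ring zify.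
Import Order.TTheory GRing.Theory Num.Theory.
Set Implicit Arguments. Unset Strict Implicit. Unset Printing Implicit Defensive.
Local Open Scope ring_scope.

Section SchurComplement.

Variables (R : comUnitRingType) (m p q : nat) (N : 'M[R]_m).
Hypothesis N_unit : N \in unitmx.

Lemma det_block_schur n (X : 'M[R]_(m, n)) Y Z :
  \det (block_mx N X Y Z) = \det N * \det (Z - Y *m invmx N *m X).
Proof.
have -> : block_mx N X Y Z =
    block_mx 1%:M 0 (Y *m invmx N) 1%:M *m block_mx N X 0 (Z - Y *m invmx N *m X).
  rewrite mulmx_block !mul1mx !mul0mx !addr0 -mulmxA mulVmx // mulmx1.
  by rewrite addrC subrK.
by rewrite det_mulmx det_lblock det_ublock !det1 !mul1r.
Qed.

Lemma det_block_glue (X1 : 'M[R]_(m, p)) (X2 : 'M[R]_(m, q)) Y1 Y2 Z1 Z2 :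
  \det (block_mx N (row_mx X1 X2) (col_mx Y1 Y2)
          (block_mx Z1 (Y1 *m invmx N *m X2) (Y2 *m invmx N *m X1) Z2)) * \det N
  = \det (block_mx N X1 Y1 Z1) * \det (block_mx N X2 Y2 Z2).
Proof.
rewrite !det_block_schur -!mulmxA mul_mx_row mul_col_row !mulmxA.
rewrite opp_block_mx add_block_mx !subrr det_ublock.
by rewrite mulrAC [RHS]mulrACA mulrA.
Qed.

End SchurComplement.

Section FriezeMatrix.

Variables (K : fieldType) (f : nat -> nat -> K).
Hypothesis fsym : forall i j, f i j = f j i.

Definition frieze_mx n (v : 'I_n -> nat) : 'M[K]_n :=
  \matrix_(i, j) (if i == j then 0 else f (v i) (v j)).

Definition pair_mx m n (v : 'I_m -> nat) (w : 'I_n -> nat) : 'M[K]_(m, n) :=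
  \matrix_(i, j) f (v i) (w j).

Definition nth_vertex (L : seq nat) {n} (i : 'I_n) : nat := nth 0%N L i.

Definition cat_vertices m n (v : 'I_m -> nat) (w : 'I_n -> nat) (i : 'I_(m + n)) :=
  match split i with inl j => v j | inr k => w k end.

Lemma cat_vertices_lshift m n (v : 'I_m -> nat) (w : 'I_n -> nat) i :
  cat_vertices v w (lshift n i) = v i.
Proof. by rewrite /cat_vertices (unsplitK (inl i)). Qed.

Lemma cat_vertices_rshift m n (v : 'I_m -> nat) (w : 'I_n -> nat) i :
  cat_vertices v w (rshift m i) = w i.
Proof. by rewrite /cat_vertices (unsplitK (inr i)). Qed.

Lemma nth_vertex_cat (s t : seq nat) m n :
  size s = m -> size t = n ->
  @nth_vertex (s ++ t) (m + n) =1 cat_vertices (nth_vertex s) (nth_vertex t).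
Proof.
move=> <- <- i; rewrite /cat_vertices /nth_vertex nth_cat.
by case: splitP => j -> /=; rewrite ?addKn.
Qed.

Lemma eq_frieze_mx n (v w : 'I_n -> nat) : v =1 w -> frieze_mx v = frieze_mx w.
Proof. by move=> vw; apply/matrixP => i j; rewrite !mxE !vw. Qed.

Lemma wf_matrix_nth_vertex L n : size L = n ->
  \det (wf_matrix f L) = \det (frieze_mx (@nth_vertex L n)).
Proof. by case: n /. Qed.

Lemma det_frieze_mx_perm n (v : 'I_n -> nat) (s : 'S_n) :
  \det (frieze_mx (v \o s)) = \det (frieze_mx v).
Proof.
have -> : frieze_mx (v \o s) = row_perm s (col_perm s (frieze_mx v)).
  by apply/matrixP => i j; rewrite !mxE (inj_eq perm_inj).
rewrite row_permE col_permE !det_mulmx det_perm -odd_permV det_perm odd_permV.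
by rewrite mulrA mulrC mulrA -signr_addb addbb mul1r.
Qed.

Lemma det_wf_matrix_perm L L' :
  perm_eq L L' -> \det (wf_matrix f L) = \det (wf_matrix f L').
Proof.
move=> eqLL'; rewrite (wf_matrix_nth_vertex (perm_size eqLL')).
have /tuple_permP[s Ls] : perm_eq L (in_tuple L') by [].
rewrite -(det_frieze_mx_perm _ s^-1); congr (\det _); apply: eq_frieze_mx => i.
by rewrite /= /nth_vertex Ls nth_mktuple permKV (tnth_nth 0%N).
Qed.

Lemma frieze_mx_cat m n (v : 'I_m -> nat) (w : 'I_n -> nat) :
  frieze_mx (cat_vertices v w) =
    block_mx (frieze_mx v) (pair_mx v w) (pair_mx w v) (frieze_mx w).
Proof.
rewrite -[LHS]submxK; congr block_mx; apply/matrixP => i j;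
by rewrite !mxE ?eq_lshift ?eq_rshift ?eq_lrshift ?eq_rlshift
  ?cat_vertices_lshift ?cat_vertices_rshift.
Qed.

Lemma pair_mx_catl m n p (v : 'I_m -> nat) (w : 'I_n -> nat) (u : 'I_p -> nat) :
  pair_mx (cat_vertices v w) u = col_mx (pair_mx v u) (pair_mx w u).
Proof.
by rewrite -[LHS]vsubmxK; congr col_mx; apply/matrixP => i j;
  rewrite !mxE ?cat_vertices_lshift ?cat_vertices_rshift.
Qed.

Lemma pair_mx_catr m n p (v : 'I_m -> nat) (w : 'I_n -> nat) (u : 'I_p -> nat) :
  pair_mx u (cat_vertices v w) = row_mx (pair_mx u v) (pair_mx u w).
Proof.
by rewrite -[LHS]hsubmxK; congr row_mx; apply/matrixP => i j;
  rewrite !mxE ?cat_vertices_lshift ?cat_vertices_rshift.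
Qed.

Lemma eq_cat_vertices m n (v : 'I_m -> nat) (w w' : 'I_n -> nat) :
  w =1 w' -> cat_vertices v w =1 cat_vertices v w'.
Proof. by move=> ww' i; rewrite /cat_vertices; case: split. Qed.

Section Edge.

Variables x y : nat.
Hypothesis fxy_neq0 : f x y != 0.

Let e : 'I_2 -> nat := nth_vertex [:: x; y].

Lemma det_frieze_mx_edge : \det (frieze_mx e) = - f x y ^+ 2.
Proof.
rewrite (expand_det_row _ ord0) !big_ord_recl big_ord0 /cofactor !det_mx11 !mxE /=.
by rewrite /bump /= (fsym y x); ring.
Qed.

Lemma invmx_frieze_mx_edge : invmx (frieze_mx e) = (f x y)^-2 *: frieze_mx e.
Proof.
have sqr_e : frieze_mx e *m frieze_mx e = (f x y ^+ 2)%:M.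
  apply/matrixP => i j; rewrite !mxE !big_ord_recl big_ord0 !mxE.
  by case: i => [[|[|//]] ?]; case: j => [[|[|//]] ?];
    rewrite /e /nth_vertex /= ?(fsym y x); ring.
have e_unit : frieze_mx e \in unitmx.
  by rewrite unitmxE det_frieze_mx_edge unitfE oppr_eq0 expf_neq0.
have right_inv : frieze_mx e *m ((f x y)^-2 *: frieze_mx e) = 1%:M.
  by rewrite -scalemxAr sqr_e scale_scalar_mx mulVf // expf_neq0.
by rewrite -[LHS]mulmx1 -right_inv mulKmx.
Qed.

Lemma pair_mx_ptolemy p q (a : 'I_p -> nat) (b : 'I_q -> nat) :
  (forall i j, f (a i) (b j) * f x y = f (a i) x * f (b j) y + f (a i) y * f (b j) x) ->
  pair_mx a e *m invmx (frieze_mx e) *m pair_mx e b = pair_mx a b.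
Proof.
move=> ptolemy; rewrite invmx_frieze_mx_edge; apply/matrixP => i j.
rewrite !mxE !big_ord_recl !big_ord0 !mxE !big_ord_recl !big_ord0 !mxE /=.
apply: (mulIf fxy_neq0); rewrite ptolemy /e /nth_vertex /= (fsym y x).
by rewrite (fsym x (b j)) (fsym y (b j)); field.
Qed.

Lemma det_frieze_mx_glue p q (a : 'I_p -> nat) (b : 'I_q -> nat) :
  (forall i j, f (a i) (b j) * f x y = f (a i) x * f (b j) y + f (a i) y * f (b j) x) ->
  \det (frieze_mx (cat_vertices e (cat_vertices a b))) * \det (frieze_mx e)
  = \det (frieze_mx (cat_vertices e a)) * \det (frieze_mx (cat_vertices e b)).
Proof.
move=> ptolemy_ab.
have ptolemy_ba i j :
    f (b i) (a j) * f x y = f (b i) x * f (a j) y + f (b i) y * f (a j) x.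
  by rewrite fsym ptolemy_ab addrC mulrC [f (b i) y * _]mulrC.
rewrite !frieze_mx_cat pair_mx_catl pair_mx_catr.
rewrite -(pair_mx_ptolemy ptolemy_ab) -(pair_mx_ptolemy ptolemy_ba).
by apply: det_block_glue; rewrite unitmxE det_frieze_mx_edge unitfE oppr_eq0 expf_neq0.
Qed.

Lemma det_wf_matrix_glue (A B : seq nat) :
  (forall a b, a \in A -> b \in B -> f a b * f x y = f a x * f b y + f a y * f b x) ->
  \det (wf_matrix f (x :: y :: A ++ B)) =
    - f x y ^- 2 * \det (wf_matrix f (x :: y :: A)) * \det (wf_matrix f (x :: y :: B)).
Proof.
move=> ptolemy.
have sizeR : size (x :: y :: A ++ B) = (2 + (size A + size B))%N by rewrite /= size_cat.
have sizeP : size (x :: y :: A) = (2 + size A)%N by [].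
have sizeQ : size (x :: y :: B) = (2 + size B)%N by [].
rewrite (wf_matrix_nth_vertex sizeR) (wf_matrix_nth_vertex sizeP).
rewrite (wf_matrix_nth_vertex sizeQ).
rewrite (eq_frieze_mx (nth_vertex_cat (s := [:: x; y]) erefl (size_cat A B))).
rewrite (eq_frieze_mx (eq_cat_vertices _ (nth_vertex_cat erefl erefl))).
rewrite !(eq_frieze_mx (nth_vertex_cat (s := [:: x; y]) erefl erefl)).
have detN_neq0 : \det (frieze_mx e) != 0.
  by rewrite det_frieze_mx_edge oppr_eq0 expf_neq0.
apply: (mulIf detN_neq0); rewrite det_frieze_mx_glue.
  by rewrite det_frieze_mx_edge; field.
by move=> i j; apply: ptolemy; apply: mem_nth.
Qed.

End Edge.

End FriezeMatrix.

Lemma R_orderE r s :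
  R_order r.+2 s.+2 = iota 1 r ++ r.+1 :: rev (iota r.+3 s) ++ [:: r.+2].
Proof.
by rewrite /R_order -[r.+2.-1]addn1 iotaD [iota r.+2 _]/= rev_cons -cats1 -catA.
Qed.

Lemma uniq_R_order r s : uniq (R_order r s).
Proof.
rewrite /R_order cat_uniq rev_uniq !iota_uniq andbT /=.
by apply/hasPn => v; rewrite mem_rev !mem_iota; lia.
Qed.

Lemma crossing_cat (L A C : seq nat) x y a b :
  L = A ++ x :: C ++ [:: y] -> uniq L -> a \in A -> b \in C ->
  crossing L a b x y.
Proof.
move=> -> uniqL aA bC; move: uniqL; rewrite cat_uniq => /and3P[_ /hasPn notA].
rewrite cons_uniq mem_cat negb_or mem_seq1 cat_uniq /= orbF.
move=> /andP[/andP[xC xy] /and3P[_ yC _]].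
have [xA bA yA] : [/\ x \notin A, b \notin A & y \notin A].
  by split; apply: notA; rewrite ?in_cons ?mem_cat ?bC ?mem_seq1 ?eqxx ?orbT.
have xb : x != b by apply: contraNneq xC => ->.
have ltaA : (index a A < size A)%N by rewrite index_mem.
have ltbC : (index b C < size C)%N by rewrite index_mem.
rewrite /crossing /pos !mem_cat !in_cons !mem_cat aA bC !eqxx !orbT /=.
rewrite mem_seq1 eqxx orbT !index_cat aA (negbTE xA) (negbTE bA) (negbTE yA) /=.
rewrite eqxx (negbTE xb) (negbTE xy) !index_cat bC (negbTE yC) /= eqxx.
lia.
Qed.

Theorem theorem3p3 (K : fieldType) (r s : nat) (hr : (3 <= r)%N) (hs : (3 <= s)%N)
  (f : nat -> nat -> K) (fsym : forall i j, f i j = f j i)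
  (hf : weak_frieze (R_order r s) [:: (r.-1, r)] f)
  (hne : f r.-1 r != 0) :
  \det (wf_matrix f (R_order r s)) =
    - (f r.-1 r) ^- 2 * \det (wf_matrix f (iota 1 r))
      * \det (wf_matrix f (iota r.-1 s)).
Proof.
case: r hr hf hne => [|[|r]] // _; case: s hs => [|[|s]] // _ hf hne.
set A := iota 1 r; set B := iota r.+3 s.
have ptolemy a b : a \in A -> b \in B ->
    f a b * f r.+1 r.+2 = f a r.+1 * f b r.+2 + f a r.+2 * f b r.+1.
  move=> aA bB; apply: hf; last by rewrite /in_diss mem_head orbT.
  by apply: crossing_cat (R_orderE r s) (uniq_R_order _ _) aA _; rewrite mem_rev.
have perm_R : perm_eq (R_order r.+2 s.+2) (r.+1 :: r.+2 :: A ++ B).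
  rewrite R_orderE -/A -/B; apply/seq.permP => P.
  by rewrite /= !count_cat /= !count_cat count_rev /=; lia.
have perm_P : perm_eq (iota 1 r.+2) (r.+1 :: r.+2 :: A).
  have -> : iota 1 r.+2 = A ++ [:: r.+1; r.+2] by rewrite -[r.+2]addn2 iotaD addn2.
  by rewrite perm_catC perm_refl.
rewrite (det_wf_matrix_perm _ perm_R) (det_wf_matrix_perm _ perm_P).
exact: det_wf_matrix_glue.
Qed.
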